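(* Suppose Algorithm MC is run on $b$ with $|b_j(v)|\le\deg(v)$ for all $v,j$, with $\alpha\in(0,1/4]$ and $T$ satisfying $\alpha^2T\ge\ln(2nk+5Tkn^2)$, and completes all $T$ rounds without terminating in step (4). Then $|b_j(v)-(B\bar f_j)_v|\le5\alpha\deg(v)$ for all $v\in V$ and $j\in[k]$.
   Context: Let $G=(V,E)$ be a unit-capacity undirected graph, $n=|V|\ge3$, every vertex of degree $\deg(v)\ge1$, each edge with a fixed arbitrary orientation; $B\in\mathbb R^{V\times E}$ is the incidence matrix (column $(u,v)$ has $+1$ in row $u$, $-1$ in row $v$, $0$ elsewhere). Algorithm MC takes $k\ge1$, $b=(b_1,\dots,b_k)\in\mathbb R^{V\times[k]}$ with $|b_j(v)|\le\deg(v)$ for all $v,j$, $\alpha\in(0,1/4]$ and an integer $T\ge1$. Set $w^1_{v,j,+}=w^1_{v,j,-}=1$. For $i=1,\dots,T$: (1) $\tilde w^i_{v,j,\circ}=w^i_{v,j,\circ}$ if $w^i_{v,j,\circ}\ge n$ and $0$ otherwise ($\circ\in\{+,-\}$); (2) $\tilde\phi^i_{v,j}=(\tilde w^i_{v,j,+}-\tilde w^i_{v,j,-})/\deg(v)$; (3) for each edge $(u,v)$ let $j^*$ maximize $|\tilde\phi^i_{u,j}-\tilde\phi^i_{v,j}|$ over $j\in[k]$ (ties arbitrary), set $f^i_{j^*}(u,v)=+1$ if $\tilde\phi^i_{u,j^*}>\tilde\phi^i_{v,j^*}$, $-1$ if $<$, $0$ otherwise, and $f^i_j(u,v)=0$ for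 $j\ne j^*$; (4) if $\sum_{j,v}\tilde\phi^i_{v,j}b_j(v)>\sum_{j,v}\tilde\phi^i_{v,j}(Bf^i_j)_v$, terminate (declaring infeasibility); (5) $r^i_{v,j}=(b_j(v)-(Bf^i_j)_v)/\deg(v)$; (6) $w^{i+1}_{v,j,+}=w^i_{v,j,+}(1+\alpha r^i_{v,j})$, $w^{i+1}_{v,j,-}=w^i_{v,j,-}(1-\alpha r^i_{v,j})$. If all $T$ rounds complete, output $\bar f_j=\frac1T\sum_{i=1}^Tf^i_j$ for each $j$. *)

From HB Require Import structures.
From mathcomp Require Import all_boot all_order all_algebra.
From mathcomp Require Import all_classical all_reals all_analysis.
Set Implicit Arguments. Unset Strict Implicit. Unset Printing Implicit Defensive.
Import Order.TTheory GRing.Theory Num.Theory.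
Local Open Scope ring_scope.

Section MC.
Variables (R : realType) (V E : finType) (src dst : E -> V) (k : nat).

Definition simple_graph : Prop :=
  (forall e, src e != dst e) /\
  (forall e e', ((src e == src e') && (dst e == dst e')) ||
                ((src e == dst e') && (dst e == src e')) -> e = e').

Definition deg (v : V) : R := #|[pred e | (src e == v) || (dst e == v)]|%:R.

(* (B f)_v for the incidence matrix B *)
Definition Bmul (f : E -> R) (v : V) : R :=
  \sum_(e | src e == v) f e - \sum_(e | dst e == v) f e.

Definition nR : R := #|V|%:R.

Definition wtil (x : R) : R := if nR <= x then x else 0.

(* step (2): w v j = (w_{v,j,+}, w_{v,j,-}) *)
Definition phi_of (w : V -> 'I_k -> R * R) (v : V) (j : 'I_k) : R :=
  (wtil (w v j).1 - wtil (w v j).2) / deg v.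

(* step (3): f (a k-tuple of flows) is a valid choice given potentials phi,
   for some (arbitrary) tie-breaking *)
Definition valid_step3 (phi : V -> 'I_k -> R) (f : 'I_k -> E -> R) : Prop :=
  forall e, exists jstar : 'I_k,
    (forall j, `|phi (src e) j - phi (dst e) j|
               <= `|phi (src e) jstar - phi (dst e) jstar|) /\
    f jstar e = (if phi (src e) jstar > phi (dst e) jstar then 1
                 else if phi (src e) jstar < phi (dst e) jstar then -1 else 0) /\
    (forall j, j != jstar -> f j e = 0).

Definition no_terminate (b : V -> 'I_k -> R) (phi : V -> 'I_k -> R)
    (f : 'I_k -> E -> R) : Prop :=
  \sum_(j : 'I_k) \sum_(v : V) phi v j * b v j
  <= \sum_(j : 'I_k) \sum_(v : V) phi v j * Bmul (f j) v.

Definition rvec (b : V -> 'I_k -> R) (f : 'I_k -> E -> R) (v : V) (j : 'I_k) : R :=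
  (b v j - Bmul (f j) v) / deg v.

(* weights: W i = w^{i+1} (round i = 0..T-1 uses W i and flow F i) *)
Fixpoint W (alpha : R) (b : V -> 'I_k -> R) (F : nat -> 'I_k -> E -> R) (i : nat)
  : V -> 'I_k -> R * R :=
  match i with
  | 0 => fun _ _ => (1, 1)
  | i'.+1 => fun v j =>
      let r := rvec b (F i') v j in
      ((W alpha b F i' v j).1 * (1 + alpha * r),
       (W alpha b F i' v j).2 * (1 - alpha * r))
  end.

Definition fbar (T : nat) (F : nat -> 'I_k -> E -> R) (j : 'I_k) (e : E) : R :=
  T%:R^-1 * \sum_(i < T) F i j e.

End MC.

From HB Require Import structures.
From mathcomp Require Import all_boot all_order all_algebra.
From mathcomp Require Import all_classical all_reals all_analysis.
From mathcomp Require Import ring lra.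
Import Order.TTheory GRing.Theory Num.Theory.
Local Open Scope ring_scope.

(* A multiplicative-weights argument on the potential Phi_i = sum of all
   weights.  Every step-(3) flow has entries in {-1, 0, 1}, so |B f_j| <= deg
   and |r| <= 2.  One round adds alpha * sum (w+ - w-) r to Phi; splitting
   w+ - w- = phi deg + (truncation error, at most n), the phi part is <= 0
   exactly because the round did not terminate, so
   Phi_T <= 2nk + 2 alpha T n^2 k <= exp(alpha^2 T).  In the other direction
   exp(x - x^2) <= 1 + x on [-1/2, 1/2] gives w+_T >= exp(alpha S - 4 alpha^2 T)
   for S = sum_i r^i_{v,j}, and symmetrically for w-; hence |S| <= 5 alpha T,
   while b - B fbar = deg S / T. *)

Section ExpBounds.
Context {R : realType}.
Implicit Types x : R.

Lemma series_exp_coeff_le_expR x n :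
  0 <= x -> series (exp_coeff x) n <= expR x.
Proof.
move=> x0; apply: nondecreasing_cvgn_le; last exact: is_cvg_series_exp_coeff.
by apply: nondecreasing_series => m _ _; exact: exp_coeff_ge0.
Qed.

Lemma expR_ge1DxDsqr_half x :
  0 <= x -> 1 + x + x ^+ 2 / 2 <= expR x.
Proof.
move=> x0; apply: le_trans _ (series_exp_coeff_le_expR _ 3 x0).
rewrite /series /exp_coeff /= !big_nat_recr //= big_geq //.
by rewrite !factS fact0 expr0 expr1 !divr1 add0r.
Qed.

Lemma expR_subsqr_le1D x :
  -(1/2) <= x -> x <= 1/2 -> expR (x - x ^+ 2) <= 1 + x.
Proof.
move=> xlo xhi; set y := x ^+ 2 - x.
have ey := expR_gt0 y.
suff key : 1 <= (1 + x) * expR y.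
  by rewrite -opprB expRN -/y -[_^-1]mul1r ler_pdivrMr.
have p : 0 <= 1 + x by lra.
have [x0|x0] := leP 0 x.
  (* [(1 + x) (1 + y) = 1 + x^3] *)
  have := ler_wpM2l p (expR_ge1Dx y); rewrite /y.
  have : 0 <= x ^+ 3 by exact: exprn_ge0.
  rewrite !exprS expr0; nra.
have y0 : 0 <= y by rewrite /y; nra.
(* [(1 + x) (1 + y + y^2/2) = 1 + x^2 (1 + x - x^2 + x^3) / 2] *)
have := ler_wpM2l p (expR_ge1DxDsqr_half _ y0); rewrite /y.
have : 0 <= x ^+ 2 * (1 + x - x ^+ 2 + x ^+ 3).
  by apply: mulr_ge0; rewrite !exprS expr0; nra.
rewrite !exprS expr0; nra.
Qed.

Lemma expR_sum_subsqr_le_prod1D {I : Type} (s : seq I) (P : pred I) (a : I -> R) :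
  (forall i, P i -> `|a i| <= 1/2) ->
  expR (\sum_(i <- s | P i) (a i - a i ^+ 2)) <= \prod_(i <- s | P i) (1 + a i).
Proof.
move=> a_small; rewrite expR_sum; apply: ler_prod => i /a_small.
rewrite ler_norml expR_ge0 => /andP[lo hi] /=.
by apply: expR_subsqr_le1D; lra.
Qed.

Lemma normr_scaled_le_half {alpha y : R} :
  0 < alpha -> alpha <= 1/4 -> `|y| <= 2 -> `|alpha * y| <= 1/2.
Proof. by move=> a_gt0 a_le y_le2; rewrite normrM gtr0_norm //; nra. Qed.

Lemma expR_scaled_sum_le_prod1D {T : nat} {alpha : R} {y : nat -> R} :
  0 < alpha -> alpha <= 1/4 -> (forall m, (m < T)%N -> `|y m| <= 2) ->
  expR (alpha * \sum_(m < T) y m - 4 * alpha ^+ 2 * T%:R)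
    <= \prod_(m < T) (1 + alpha * y m).
Proof.
move=> a_gt0 a_le y_le2.
have ay_small (m : 'I_T) := normr_scaled_le_half a_gt0 a_le (y_le2 m (ltn_ord m)).
apply: le_trans _ (expR_sum_subsqr_le_prod1D _ _ (fun m : 'I_T => alpha * y m)
  (fun m _ => ay_small m)).
rewrite ler_expR mulr_sumr mulr_natr -[X in _ *+ X]card_ord -sumr_const -sumrB.
apply: ler_sum => m _; rewrite lerD2l lerN2 exprMn.
have := y_le2 m (ltn_ord m); rewrite ler_norml => /andP[lo hi].
have : y m ^+ 2 <= 4 by rewrite expr2; nra.
by move=> /(ler_wpM2l (sqr_ge0 alpha)); lra.
Qed.

End ExpBounds.

(* No simplicity is needed: a loop counts in [deg] but cancels in [Bmul]. *)
Lemma normr_Bmul_le_deg {R : realType} {V E : finType} (src dst : E -> V)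
    (f : E -> R) v :
  (forall e, `|f e| <= 1) -> `|Bmul src dst f v| <= deg R src dst v.
Proof.
move=> f_le1; rewrite /Bmul /deg -sum1_card natr_sum.
rewrite big_mkcond [X in _ - X]big_mkcond [X in _ <= X]big_mkcond -sumrB /=.
apply: le_trans (ler_norm_sum _ _ _) (ler_sum _ _) => e _; rewrite !inE.
have := f_le1 e.
by case: eqP; case: eqP => //= _ _; rewrite ?subrr ?normr0 ?sub0r ?normrN ?subr0.
Qed.

Lemma Bmul_fbar {R : realType} {V E : finType} (src dst : E -> V) (k T : nat)
    (F : nat -> 'I_k -> E -> R) j v :
  Bmul src dst (fbar T F j) v = T%:R^-1 * \sum_(i < T) Bmul src dst (F i j) v.
Proof.
rewrite /Bmul /fbar -!mulr_sumr -mulrBr sumrB.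
by congr (_ * (_ - _)); exact: exchange_big.
Qed.

Lemma valid_step3_norm_le1 {R : realType} {V E : finType} {src dst : E -> V} {k : nat}
    {phi : V -> 'I_k -> R} {f : 'I_k -> E -> R} :
  valid_step3 src dst phi f -> forall j e, `|f j e| <= 1.
Proof.
move=> valid j e; have [js [_ [fjs f0]]] := valid e.
have [->|ne] := eqVneq j js; last by rewrite f0 // normr0.
by rewrite fjs; case: ifP => _; [|case: ifP => _]; rewrite ?normrN ?normr1 ?normr0.
Qed.

Lemma normr_truncationB_le (R : realType) (V : finType) (x y : R) :
  0 <= x -> 0 <= y -> `|(x - y) - (wtil V x - wtil V y)| <= nR R V.
Proof.
move=> x0 y0; have n0 : 0 <= nR R V by exact: ler0n.
rewrite /wtil ler_norml.
by case: (leP (nR R V) x); case: (leP (nR R V) y) => *; apply/andP; split; lra.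
Qed.

Section MultiplicativeWeights.
Context {R : realType} {V E : finType} {src dst : E -> V} {k : nat}.
Context {b : V -> 'I_k -> R} {alpha : R} {T : nat} {F : nat -> 'I_k -> E -> R}.

Local Notation deg := (deg R src dst).
Local Notation w := (W src dst alpha b F).
Local Notation r i := (rvec src dst b (F i)).
Local Notation phi i := (phi_of src dst (w i)).

Hypothesis deg_gt0 : forall v, 0 < deg v.
Hypothesis b_le_deg : forall v j, `|b v j| <= deg v.
Hypothesis alpha_gt0 : 0 < alpha.
Hypothesis alpha_le : alpha <= 1/4.
Hypothesis rounds : forall i, (i < T)%N ->
  valid_step3 src dst (phi i) (F i) /\ no_terminate src dst b (phi i) (F i).

Lemma W_prodE i v j :
  w i v j = (\prod_(m < i) (1 + alpha * r m v j), \prod_(m < i) (1 - alpha * r m v j)).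
Proof.
elim: i => [|i IH]; first by rewrite !big_ord0.
by rewrite /= IH !big_ord_recr.
Qed.

Lemma normr_rvec_le2 i v j : (i < T)%N -> `|r i v j| <= 2.
Proof.
move=> iT; have [valid _] := rounds i iT.
have B_le := normr_Bmul_le_deg src dst _ v (valid_step3_norm_le1 valid j).
rewrite /rvec normrM normfV (gtr0_norm (deg_gt0 v)) ler_pdivrMr //.
by apply: le_trans (ler_normB _ _) _; have := b_le_deg v j; lra.
Qed.

Lemma W_gt0 i v j : (i <= T)%N -> 0 < (w i v j).1 /\ 0 < (w i v j).2.
Proof.
move=> iT; rewrite W_prodE; split; apply: prodr_gt0 => m _;
  have := normr_scaled_le_half alpha_gt0 alpha_le
    (normr_rvec_le2 m v j (leq_trans (ltn_ord m) iT));
  rewrite ler_norml => /andP[lo hi]; lra.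
Qed.

Definition potential i := \sum_v \sum_j ((w i v j).1 + (w i v j).2).

Lemma potentialS i :
  potential i.+1
  = potential i + alpha * \sum_v \sum_j ((w i v j).1 - (w i v j).2) * r i v j.
Proof.
rewrite /potential mulr_sumr -big_split; apply: eq_bigr => v _.
by rewrite mulr_sumr -big_split; apply: eq_bigr => j _ /=; ring.
Qed.

Lemma potential_ge_W i v j : (i <= T)%N ->
  (w i v j).1 + (w i v j).2 <= potential i.
Proof.
move=> iT; have pos u l := @W_gt0 i u l iT.
rewrite /potential (bigD1 v) //= (bigD1 j) //= -addrA lerDl.
apply: addr_ge0;
  [apply: sumr_ge0 => l _ | apply: sumr_ge0 => u _; apply: sumr_ge0 => l _].
- by have [] := pos v l; lra.
- by have [] := pos u l; lra.
Qed.

Lemma phi_deg_residual_le0 i : (i < T)%N ->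
  \sum_v \sum_j phi i v j * deg v * r i v j <= 0.
Proof.
move=> iT; have [_ no_term] := rounds i iT.
have -> : \sum_v \sum_j phi i v j * deg v * r i v j
        = \sum_v \sum_j phi i v j * (b v j - Bmul src dst (F i j) v).
  apply: eq_bigr => v _; apply: eq_bigr => j _.
  by rewrite /rvec mulrAC -mulrA divfK ?gt_eqF.
rewrite exchange_big /=; under eq_bigr do under eq_bigr do rewrite mulrBr.
under eq_bigr do rewrite sumrB.
by rewrite sumrB subr_le0.
Qed.

Lemma weighted_residual_le i : (i < T)%N ->
  \sum_v \sum_j ((w i v j).1 - (w i v j).2) * r i v j <= 2 * nR R V ^+ 2 * k%:R.
Proof.
move=> iT; pose err v j := ((w i v j).1 - (w i v j).2) - phi i v j * deg v.
have err_le v j : `|err v j| <= nR R V.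
  have [p1 p2] := W_gt0 i v j (ltnW iT).
  rewrite /err /phi_of divfK; last exact: lt0r_neq0 (deg_gt0 v).
  exact: normr_truncationB_le (ltW p1) (ltW p2).
have err_sumE : \sum_v \sum_j err v j * r i v j
    = \sum_v \sum_j ((w i v j).1 - (w i v j).2) * r i v j
      - \sum_v \sum_j phi i v j * deg v * r i v j.
  rewrite -sumrB; apply: eq_bigr => v _; rewrite -sumrB; apply: eq_bigr => j _.
  by rewrite /err mulrBl.
have err_sum_le : \sum_v \sum_j err v j * r i v j <= 2 * nR R V ^+ 2 * k%:R.
  have -> : 2 * nR R V ^+ 2 * k%:R = \sum_(v : V) \sum_(j < k) nR R V * 2.
    by rewrite !sumr_const card_ord /nR -mulrnA -[_ *+ (_ * _)]mulr_natr natrM; ring.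
  apply: ler_sum => v _; apply: ler_sum => j _.
  apply: le_trans (ler_norm _) _; rewrite normrM.
  by apply: ler_pM; rewrite ?normr_ge0 ?err_le ?normr_rvec_le2.
have := phi_deg_residual_le0 i iT; rewrite err_sumE in err_sum_le; lra.
Qed.

Lemma potential_le i : (i <= T)%N ->
  potential i <= 2 * nR R V * k%:R + i%:R * (alpha * (2 * nR R V ^+ 2 * k%:R)).
Proof.
elim: i => [|i IH] iT.
  have -> : potential 0 = 2 * nR R V * k%:R.
    rewrite /potential /= !sumr_const card_ord /nR -mulrnA.
    by rewrite -[_ *+ (_ * _)]mulr_natr natrM; ring.
  by rewrite mul0r addr0.
have step := ler_wpM2l (ltW alpha_gt0) (weighted_residual_le i iT).
by rewrite potentialS -[i.+1%:R]natr1; have := IH (ltnW iT); lra.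
Qed.

Lemma potential_le_expR : 0 < nR R V -> (0 < k)%N ->
  ln (2 * nR R V * k%:R + 5 * T%:R * k%:R * nR R V ^+ 2) <= alpha ^+ 2 * T%:R ->
  potential T <= expR (alpha ^+ 2 * T%:R).
Proof.
move=> n_gt0 k_gt0 ln_le.
set Y := 2 * nR R V * k%:R + 5 * T%:R * k%:R * nR R V ^+ 2 in ln_le *.
have nk_gt0 : 0 < nR R V * k%:R by rewrite mulr_gt0 // ltr0n.
have Tkn_ge0 : 0 <= T%:R * k%:R * nR R V ^+ 2 by rewrite !mulr_ge0 ?ler0n ?sqr_ge0.
have Y_gt0 : 0 < Y by rewrite /Y; nra.
apply: le_trans (potential_le T (leqnn T)) _.
apply: le_trans (_ : _ <= Y) _.
  by rewrite /Y; have := ler_wpM2r Tkn_ge0 alpha_le; lra.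
by rewrite -[Y in Y <= _]lnK ?posrE // ler_expR.
Qed.

Lemma normr_sum_rvec_le v j : 0 < nR R V -> (0 < k)%N ->
  ln (2 * nR R V * k%:R + 5 * T%:R * k%:R * nR R V ^+ 2) <= alpha ^+ 2 * T%:R ->
  `|\sum_(m < T) r m v j| <= 5 * alpha * T%:R.
Proof.
move=> n_gt0 k_gt0 ln_le; have pot_le := potential_le_expR n_gt0 k_gt0 ln_le.
have sum_le (y : nat -> R) : (forall m, (m < T)%N -> `|y m| <= 2) ->
    \prod_(m < T) (1 + alpha * y m) <= potential T ->
    alpha * \sum_(m < T) y m <= 5 * alpha ^+ 2 * T%:R.
  move=> y_le2 prod_le.
  have := expR_scaled_sum_le_prod1D alpha_gt0 alpha_le y_le2.
  by move=> /le_trans/(_ (le_trans prod_le pot_le)); rewrite ler_expR; lra.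
have := potential_ge_W T v j (leqnn T); have := W_gt0 T v j (leqnn T).
rewrite W_prodE /= => -[p1 p2] wT_le.
have r_le2 m : (m < T)%N -> `|r m v j| <= 2 by exact: normr_rvec_le2.
have Nr_le2 m : (m < T)%N -> `|- r m v j| <= 2 by rewrite normrN; exact: r_le2.
have up : alpha * \sum_(m < T) r m v j <= 5 * alpha ^+ 2 * T%:R.
  by apply: sum_le r_le2 _; lra.
have down : alpha * \sum_(m < T) - r m v j <= 5 * alpha ^+ 2 * T%:R.
  by apply: sum_le Nr_le2 _; under eq_bigr do rewrite mulrN; lra.
rewrite sumrN mulrN in down.
rewrite -(ler_pM2l alpha_gt0) -[alpha in alpha * `|_|]gtr0_norm // -normrM ler_norml.
have -> : alpha * (5 * alpha * T%:R) = 5 * alpha ^+ 2 * T%:R by ring.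
by apply/andP; split; lra.
Qed.

Lemma residual_fbarE v j : (0 < T)%N ->
  b v j - Bmul src dst (fbar T F j) v = deg v / T%:R * \sum_(m < T) r m v j.
Proof.
move=> T_gt0; rewrite Bmul_fbar /rvec -mulr_suml [\sum_(m < T) (b v j - _)]sumrB.
rewrite sumr_const card_ord -mulr_natr.
by field; rewrite (lt0r_neq0 (deg_gt0 v)) gt_eqF ?ltr0n.
Qed.

End MultiplicativeWeights.

Theorem lemma2p12 (R : realType) (V E : finType) (src dst : E -> V) (k : nat)
  (b : V -> 'I_k -> R) (alpha : R) (T : nat) (F : nat -> 'I_k -> E -> R) :
  simple_graph src dst ->
  (3 <= #|V|)%N ->
  (forall v, 1 <= deg R src dst v) ->
  (1 <= k)%N ->
  (forall v j, `|b v j| <= deg R src dst v) ->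
  0 < alpha -> alpha <= 1/4 ->
  (1 <= T)%N ->
  alpha ^+ 2 * T%:R >=
    ln (2 * (nR R V) * k%:R + 5 * T%:R * k%:R * (nR R V) ^+ 2) ->
  (forall i, (i < T)%N ->
     let phi := phi_of src dst (W src dst alpha b F i) in
     valid_step3 src dst phi (F i) /\ no_terminate src dst b phi (F i)) ->
  forall v j,
    `|b v j - Bmul src dst (fbar T F j) v| <= 5 * alpha * deg R src dst v.
Proof.
move=> _ V_ge3 deg_ge1 k_gt0 b_le a_gt0 a_le T_gt0 ln_le rounds v j.
have deg_gt0 u : 0 < deg R src dst u by exact: lt_le_trans ltr01 (deg_ge1 u).
have n_gt0 : 0 < nR R V by rewrite ltr0n (leq_trans _ V_ge3).
have S_le := normr_sum_rvec_le deg_gt0 b_le a_gt0 a_le rounds v j n_gt0 k_gt0 ln_le.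
rewrite (residual_fbarE deg_gt0 v j T_gt0) normrM.
have c_ge0 : 0 <= deg R src dst v / T%:R by rewrite divr_ge0 ?ler0n ?ltW.
rewrite ger0_norm //; apply: le_trans (ler_wpM2l c_ge0 S_le) _.
have -> : deg R src dst v / T%:R * (5 * alpha * T%:R) = 5 * alpha * deg R src dst v.
  by field; rewrite gt_eqF ?ltr0n.
exact: lexx.
Qed.
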